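(* For every integer $n\ge 3$: $\chi_{ei}(C_n)=1$ if $n=3$; $\chi_{ei}(C_n)=2$ if $n\ge 4$ and $n$ is even; $\chi_{ei}(C_n)=3$ if $n\ge 4$ and $n$ is odd.
   Context: All graphs are finite and simple. $C_n$ is the cycle on $n$ vertices. A path $P_4$ in $G$ is a sequence $uxyv$ of four distinct vertices with $ux,xy,yv\in E(G)$; $u,v$ are its end vertices. An $e$-injective $k$-coloring of $G$ is a function $f:V(G)\to\{1,\dots,k\}$ with $f(u)\ne f(v)$ whenever $u,v$ are the end vertices of some path $P_4$ in $G$; $\chi_{ei}(G)$ is the least such $k$. *)

From mathcomp Require Import all_boot.
Set Implicit Arguments. Unset Strict Implicit. Unset Printing Implicit Defensive.

(* A finite simple graph is a symmetric irreflexive relation e on a finType T. *)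

Definition cycle_graph (n : nat) : rel 'I_n :=
  fun i j => (nat_of_ord j == i.+1 %% n) || (nat_of_ord i == j.+1 %% n).

Arguments cycle_graph n : clear implicits.

Definition P4_ends (T : finType) (e : rel T) (u v : T) : Prop :=
  exists x y : T, [&& uniq [:: u; x; y; v], e u x, e x y & e y v].

(* An e-injective k-coloring: colours are the k elements of 'I_k
   (standing for {1,...,k}); end vertices of any P4 get distinct colours. *)
Definition ei_coloring (T : finType) (e : rel T) (k : nat) (f : T -> 'I_k) : Prop :=
  forall u v : T, P4_ends e u v -> f u != f v.

Definition ei_colorable (T : finType) (e : rel T) (k : nat) : Prop :=
  exists f : T -> 'I_k, ei_coloring e f.

Definition is_chi_ei (T : finType) (e : rel T) (k : nat) : Prop :=
  ei_colorable e k /\ forall k', ei_colorable e k' -> k <= k'.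

From mathcomp Require Import all_boot zify.
Set Implicit Arguments. Unset Strict Implicit. Unset Printing Implicit Defensive.

(* In [C_n] with [n >= 4] a [P4] runs three steps in one direction, so its
   end vertices are exactly the pairs [{i, i + 3 mod n}].  An e-injective
   colouring is thus one with [f (i + 3) <> f i].  For even [n] the parity
   of [i] is such a colouring; for odd [n] the walk [0, 3, 6, ...] returns
   to [0] after the odd number [n] of steps, so two colours cannot
   alternate along it and three are needed.  [C_3] has no [P4] at all. *)

Section P4Ends.

Variables (T : finType) (e : rel T).

Lemma P4_ends_card u v : P4_ends e u v -> 3 < #|T|.
Proof.
case=> x [y /and4P [/card_uniqP card_p _ _ _]].
by rewrite -[4]/(size [:: u; x; y; v]) -card_p max_card.
Qed.

Lemma ei_colorable_gt0 k (x : T) : ei_colorable e k -> 0 < k.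
Proof. by case=> f _; apply: leq_ltn_trans (ltn_ord (f x)). Qed.

Lemma ei_colorable_gt1 k u v : P4_ends e u v -> ei_colorable e k -> 1 < k.
Proof.
move=> uv [f f_ei]; have := f_ei u v uv.
case: (f u) (f v) => [a lt_ak] [b lt_bk]; rewrite -val_eqE /=; lia.
Qed.

End P4Ends.

Lemma iter_flip (T : Type) (g : T -> T) (b : T -> bool) :
  (forall x, b (g x) = ~~ b x) -> forall m x, b (iter m g x) = odd m (+) b x.
Proof. by move=> flip; elim=> [|m IH] x //=; rewrite flip IH addNb. Qed.

Section Cycle.

Variable n : nat.

Lemma cycle_graphE (i j : 'I_n) : cycle_graph n i j = (j == ordS i) || (i == ordS j).
Proof. by []. Qed.

Lemma val_iter_ordS k (i : 'I_n) : val (iter k (@ordS n) i) = (i + k) %% n.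
Proof.
elim: k => [|k IH] /=; first by rewrite addn0 modn_small.
by rewrite IH -addn1 modnDml addn1 addnS.
Qed.

Lemma cycle_path_forward (x y z : 'I_n) :
  cycle_graph n y z -> x != z -> y = ordS x -> z = ordS y.
Proof.
rewrite cycle_graphE => /orP [/eqP // | /eqP y_Sz] xz y_Sx.
by move: xz; rewrite y_Sx in y_Sz; rewrite (ordS_inj y_Sz) eqxx.
Qed.

Lemma cycle_path_backward (x y z : 'I_n) :
  cycle_graph n y z -> x != z -> x = ordS y -> y = ordS z.
Proof.
rewrite cycle_graphE => /orP [/eqP z_Sy | /eqP //] xz x_Sy.
by move: xz; rewrite x_Sy z_Sy eqxx.
Qed.

Lemma P4_ends_cycle (u v : 'I_n) : P4_ends (cycle_graph n) u v ->
  v = iter 3 (@ordS n) u \/ u = iter 3 (@ordS n) v.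
Proof.
case=> x [y /and4P [uniq_p ux xy yv]].
have [uy xv] : u != y /\ x != v.
  by move: uniq_p; rewrite /= !inE !negb_or => /and4P [/and3P [_ ? _] /andP [_ ?] _ _].
move: ux; rewrite cycle_graphE => /orP [/eqP x_Su | /eqP u_Sx].
  have y_Sx := cycle_path_forward xy uy x_Su.
  by left; rewrite (cycle_path_forward yv xv y_Sx) y_Sx x_Su.
have x_Sy := cycle_path_backward xy uy u_Sx.
by right; rewrite u_Sx x_Sy (cycle_path_backward yv xv x_Sy).
Qed.

Lemma ei_coloring_cycle k (f : 'I_n -> 'I_k) :
  (forall u, f (iter 3 (@ordS n) u) != f u) -> ei_coloring (cycle_graph n) f.
Proof. by move=> f_shift u v /P4_ends_cycle [-> | ->]; rewrite // eq_sym. Qed.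

Lemma ei_colorable_even_cycle : ~~ odd n -> ei_colorable (cycle_graph n) 2.
Proof.
move=> even_n; exists (fun i : 'I_n => inord (odd i)); apply: ei_coloring_cycle => u.
rewrite -(inj_eq (@ord_inj _)) !inordK ?ltnS ?leq_b1 // val_iter_ordS odd_mod ?(negbTE even_n) //.
by rewrite oddD addbT; case: odd.
Qed.

Lemma ei_colorable_cycle_ge6 : 6 <= n -> ei_colorable (cycle_graph n) 3.
Proof.
(* The parity colouring fails only on the three pairs wrapping around [0];
   the third colour on [0, 1, 2] repairs them. *)
move=> n_ge6; pose c i := if i < 3 then 2 else odd i.
have c_lt3 i : c i < 3 by rewrite /c; case: ifP; case: odd.
exists (fun i : 'I_n => inord (c i)); apply: ei_coloring_cycle => u.
rewrite -(inj_eq (@ord_inj _)) !inordK ?c_lt3 // val_iter_ordS.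
have lt_un := ltn_ord u.
have [lt_u3n | le_n_u3] := ltnP (u + 3) n.
  rewrite modn_small // /c ltnNge leq_addl /= oddD addbT.
  by case: ifP => _; case: odd.
rewrite -(subnK le_n_u3) modnDr modn_small; last lia.
by rewrite /c ifT ?ifN; [case: odd | lia | lia].
Qed.

Hypothesis n_ge4 : 4 <= n.

Lemma P4_ends_iter_ordS (u : 'I_n) : P4_ends (cycle_graph n) u (iter 3 (@ordS n) u).
Proof.
exists (ordS u), (ordS (ordS u)).
apply/and4P; split; rewrite ?cycle_graphE ?eqxx //.
change (uniq [seq iter k (@ordS n) u | k <- iota 0 4]).
rewrite map_inj_in_uniq ?iota_uniq // => a b; rewrite !mem_iota => a_lt4 b_lt4.
move/(congr1 val); rewrite !val_iter_ordS => /eqP.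
by rewrite eqn_modDl !modn_small => [/eqP | |]; lia.
Qed.

Lemma ei_coloring_cycle_shift3 k (f : 'I_n -> 'I_k) u :
  ei_coloring (cycle_graph n) f -> f (iter 3 (@ordS n) u) != f u.
Proof. by move=> f_ei; rewrite eq_sym; apply/f_ei/P4_ends_iter_ordS. Qed.

Lemma ei_colorable_odd_cycle_gt2 k : odd n -> ei_colorable (cycle_graph n) k -> 2 < k.
Proof.
move=> odd_n [f f_ei]; rewrite ltnNge; apply/negP => k_le2.
pose b i := val (f i) == 0.
have flip i : b (iter 3 (@ordS n) i) = ~~ b i.
  have := ei_coloring_cycle_shift3 i f_ei; rewrite /b -val_eqE.
  have := ltn_ord (f i); have := ltn_ord (f (iter 3 (@ordS n) i)).
  case: eqP; case: eqP => /=; lia.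
pose u : 'I_n := Ordinal n_ge4.
have period : iter n (iter 3 (@ordS n)) u = u.
  by apply: val_inj; rewrite -iterM val_iter_ordS -modnDmr modnMr addn0 modn_small.
by have := iter_flip flip n u; rewrite period odd_n; case: (b u).
Qed.

End Cycle.

Lemma ei_colorable_C3 : ei_colorable (cycle_graph 3) 1.
Proof. by exists (fun=> ord0) => u v /P4_ends_card; rewrite card_ord. Qed.

Lemma ei_colorable_C5 : ei_colorable (cycle_graph 5) 3.
Proof.
exists (fun i : 'I_5 => inord (nth 0 [:: 0; 0; 1; 1; 2] i)); apply: ei_coloring_cycle.
by case=> [[|[|[|[|[|i]]]]] lt_i5] //; rewrite -(inj_eq (@ord_inj _)) !inordK.
Qed.

Theorem proposition3p2 (n : nat) (hn : 3 <= n) :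
  (n = 3 -> is_chi_ei (cycle_graph n) 1) /\
  (4 <= n -> ~~ odd n -> is_chi_ei (cycle_graph n) 2) /\
  (4 <= n -> odd n -> is_chi_ei (cycle_graph n) 3).
Proof.
split; [move=> -> | split=> n_ge4 parity_n].
- split=> [|k]; [exact: ei_colorable_C3 | exact: ei_colorable_gt0 ord0].
- split=> [|k]; first exact: ei_colorable_even_cycle.
  exact: ei_colorable_gt1 (P4_ends_iter_ordS n_ge4 (Ordinal hn)).
- split=> [|k]; last exact: ei_colorable_odd_cycle_gt2.
  have [-> | n_ne5] := eqVneq n 5; first exact: ei_colorable_C5.
  have n_ne4 : n != 4 by move: parity_n; apply: contraTneq => ->.
  by apply: ei_colorable_cycle_ge6; lia.
Qed.
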